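(* Let $G$ be a fullerene graph and $S$ a perfect star packing of $G$. If a pentagonal face $P$ of $G$ has a vertex $x\in C(S)$, then $G-C(S)$ contains a cycle $C$ which is not the boundary of a face of $G$ such that the path $P-x$ is a subgraph of $C$.
   Context: A fullerene graph is a finite simple connected (equivalently, $3$-connected) plane cubic graph all of whose faces are pentagons or hexagons. A perfect star packing of $G$ is a spanning subgraph $S$ of $G$ every connected component of which is isomorphic to $K_{1,3}$; $C(S)$ denotes the set of centers (degree-$3$ vertices) of the stars in $S$. A cycle of $G$ is facial if it bounds a face of $G$, and non-facial otherwise. *)

From mathcomp Require Import all_boot.
Set Implicit Arguments. Unset Strict Implicit. Unset Printing Implicit Defensive.

(* A plane graph is encoded combinatorially by a rotation system:
   V : vertices, adj : adjacency, rho v : the cyclic successor of a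
   neighbour of v in the (clockwise) rotation around v.  Darts are the
   ordered pairs (u,v) with adj u v; the face successor of the dart (u,v)
   is (v, rho v u); faces are the orbits of the face successor on darts.
   The embedding is on the sphere (plane) iff Euler's formula V-E+F = 2
   holds (for a connected graph). *)

Section Fullerene.
Variables (V : finType) (adj : rel V) (rho : V -> V -> V).

Definition nbhd (v : V) : {set V} := [set u | adj v u].

Definition darts : {set V * V} := [set d | adj d.1 d.2].

Definition face_succ (d : V * V) : V * V := (d.2, rho d.2 d.1).

Definition face_of (d : V * V) : {set V * V} :=
  [set d' | fconnect face_succ d d'].

Definition faces : {set {set V * V}} := [set face_of d | d in darts].

Definition face_vertices (F : {set V * V}) : {set V} := [set d.1 | d in F].

Definition face_edges (F : {set V * V}) : {set {set V}} :=
  [set [set d.1; d.2] | d in F].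

Definition simple_graph := symmetric adj /\ irreflexive adj.
Definition cubic := forall v, #|nbhd v| = 3.
Definition connected_graph := forall u v, connect adj u v.

Definition rotation_system :=
  forall v, (forall u, adj v u -> adj v (rho v u)) /\
            (forall u w, adj v u -> adj v w -> fconnect (rho v) u w).

(* Euler's formula V - E + F = 2, with E = #darts / 2, doubled *)
Definition euler_sphere :=
  (#|V| + #|faces|).*2 = #|darts| + 4.

Definition plane_cubic_graph :=
  [/\ simple_graph, connected_graph, cubic, rotation_system & euler_sphere].

Definition fullerene :=
  plane_cubic_graph /\
  forall F, F \in faces ->
    ((#|F| == 5) || (#|F| == 6)) /\ #|face_vertices F| = #|F|.

(* Perfect star packing: a spanning subgraph (given by its symmetric edge
   relation s contained in adj) every component of which is K_{1,3}. *)
Definition perfect_star_packing (s : rel V) :=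
  [/\ symmetric s, subrel s adj &
   forall v, let K := [set w | connect s v w] in
     #|K| = 4 /\
     exists2 c, c \in K &
       (forall w, w \in K -> w != c -> s c w) /\
       (forall w w', w \in K -> w' \in K -> w != c -> w' != c -> ~~ s w w')].

Definition centers (s : rel V) : {set V} := [set v | #|[set w | s v w]| == 3].

Definition is_cycle (p : seq V) := [/\ uniq p, 3 <= size p & cycle adj p].

Definition cycle_edges (p : seq V) : {set {set V}} :=
  [set [set x; next p x] | x in p].

Definition facial_cycle (p : seq V) :=
  exists2 F, F \in faces & cycle_edges p = face_edges F.

End Fullerene.

From mathcomp Require Import all_boot.
Set Implicit Arguments. Unset Strict Implicit. Unset Printing Implicit Defensive.

(* Every vertex outside C(S) is a leaf of exactly one star, and centres are
   pairwise non-adjacent, so each such vertex has exactly one neighbour in C(S):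
   G - C(S) is 2-regular.  Writing P = x a1 a2 a3 a4, the path a1 a2 a3 a4 lies in
   G - C(S), and the non-backtracking walk started on the dart (a1, a2) closes up
   into a cycle through it.  That cycle avoids x, so a face bounded by it cannot
   contain the dart (a1, a2) (its face walk would continue along P to (a4, x));
   it therefore traverses a3 a2 a1, forcing the rotation at a2 to exchange a1
   and a3, which is impossible at a vertex of degree 3. *)

Lemma next_map_in (T T' : eqType) (h : T -> T') (p : seq T) x :
  {in p &, injective h} -> uniq p -> x \in p ->
  next (map h p) (h x) = h (next p x).
Proof.
move=> h_inj p_uniq /rot_to [i q p_rot].
have hp_uniq : uniq (map h p) by rewrite map_inj_in_uniq.
rewrite -(next_rot i p_uniq) -(next_rot i hp_uniq) -map_rot p_rot.
by case: q {p_rot} => [|y q] /=; rewrite !eqxx.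
Qed.

Section TwoRegular.
Variables (V : finType) (r : rel V).
Hypotheses (r_sym : symmetric r) (r_irr : irreflexive r).
Hypothesis r_deg2 : forall u v, r u v -> #|[set w | r u w]| = 2.

Definition rdart : pred (V * V) := [pred d | r d.1 d.2].

Definition swap (d : V * V) : V * V := (d.2, d.1).

(* The default [d.1] is never used on darts, where the other neighbour exists. *)
Definition step (d : V * V) : V * V :=
  (d.2, odflt d.1 [pick c | r d.2 c & c != d.1]).

Lemma card_other_nbrs b a : r b a -> #|[set w | r b w] :\ a| = 1.
Proof. by move=> ba; move: (r_deg2 ba); rewrite (cardsD1 a) inE ba => -[]. Qed.

Lemma other_nbr_uniq b a c c' : r b a -> r b c -> r b c' ->
  c != a -> c' != a -> c' = c.
Proof.
move=> ba bc bc' ca c'a.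
have /eqP/cards1P [z Ez] := card_other_nbrs ba.
have : c \in [set z] by rewrite -Ez !inE ca bc.
have : c' \in [set z] by rewrite -Ez !inE c'a bc'.
by rewrite !inE => /eqP -> /eqP ->.
Qed.

Lemma step_eq a b c : r a b -> r b c -> c != a -> step (a, b) = (b, c).
Proof.
move=> ab bc ca; rewrite /step /=.
case: pickP => [c' /andP [bc' c'a]|/(_ c)]; last by rewrite bc ca.
have ba : r b a by rewrite r_sym.
by rewrite (other_nbr_uniq ba bc bc' ca c'a).
Qed.

Lemma stepP a b : r a b -> exists2 c, step (a, b) = (b, c) & r b c && (c != a).
Proof.
move=> ab; have ba : r b a by rewrite r_sym.
have : 0 < #|[set w | r b w] :\ a| by rewrite card_other_nbrs.
case/card_gt0P => c; rewrite !inE => /andP [ca bc].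
by exists c; [apply: step_eq | rewrite bc ca].
Qed.

Lemma step_rdart : {homo step : d / d \in rdart}.
Proof. by case=> a b /stepP [c -> /andP []]. Qed.

Lemma swap_rdart : {homo swap : d / d \in rdart}.
Proof. by case=> a b; rewrite !inE /= r_sym. Qed.

Lemma step_inj : {in rdart &, injective step}.
Proof.
case=> a b [a' b']; rewrite !inE /= => ab a'b'.
have [c -> /andP [bc ca]] := stepP ab.
have [c' -> /andP [_ c'a']] := stepP a'b' => -[eb ec]; subst b' c'.
case: (eqVneq a' a) => [-> //|a'a].
have ba : r b a by rewrite r_sym.
have ba' : r b a' by rewrite r_sym.
by move: c'a'; rewrite (other_nbr_uniq ba bc ba' ca a'a) eqxx.
Qed.

Lemma step_swap : {in rdart, forall d, step (swap (step d)) = swap d}.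
Proof.
case=> a b; rewrite inE /= => ab; have [c -> /andP [bc ca]] := stepP ab.
by rewrite /swap /=; apply: step_eq; rewrite 1?r_sym // eq_sym.
Qed.

Lemma step_neq_swap : {in rdart, forall d, step d != swap d}.
Proof.
by case=> a b; rewrite inE /= => /stepP [c -> /andP [_ ca]]; apply: contra ca => /eqP [->].
Qed.

Lemma swap_iter_step d k : d \in rdart -> iter k step d = swap d ->
  forall i, i <= k -> swap (iter i step d) = iter (k - i) step d.
Proof.
move=> dr dk; elim=> [|i IHi] ik; first by rewrite subn0.
have iter_r j : iter j step d \in rdart by apply: iter_in step_rdart _ dr.
have kS : k - i = (k - i.+1).+1 by rewrite subnS prednK // subn_gt0.
apply: step_inj; rewrite ?swap_rdart //.
by rewrite -iterS -kS -IHi ?(ltnW ik) // iterS step_swap.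
Qed.

(* Reversal conjugates [step] to its inverse, so if the orbit of [d] met
   [swap d] then at the middle of the arc some dart would equal its own reversal
   or be followed by it. *)
Lemma iter_step_neq_swap d k : d \in rdart -> iter k step d != swap d.
Proof.
move=> dr; apply/eqP; rewrite -(odd_double_half k); move: (odd k) (k./2) => b m dk.
have m_le : m <= b + m.*2 by rewrite -addnn addnA leq_addl.
have := swap_iter_step dr dk m_le; rewrite -addnn addnA addnK {dk m_le}.
have zr : iter m step d \in rdart by apply: iter_in step_rdart _ dr.
case: b; rewrite ?add1n ?add0n; first by move/esym/eqP; apply/negP: (step_neq_swap zr).
move: zr; case: (iter m step d) => a a' /=; rewrite inE /= => aa' [e _].
by move: aa'; rewrite e r_irr.
Qed.

Lemma fconnect_step_sym :
  {in rdart &, forall d d', fconnect step d d' = fconnect step d' d}.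
Proof. exact: fconnect_sym_in step_rdart step_inj. Qed.

Lemma orbit_rdart e : e \in rdart -> {subset orbit step e <= rdart}.
Proof.
by move=> er d; rewrite -fconnect_orbit => /iter_findex <-; apply: iter_in step_rdart _ er.
Qed.

Lemma orbit_fst_inj e : e \in rdart -> {in orbit step e &, injective fst}.
Proof.
move=> er [a b] [a' b'] ed ed' /= aa'; subst a'.
have dr := orbit_rdart er ed; have d'r := orbit_rdart er ed'.
case: (eqVneq b' b) => [-> //|b'b]; exfalso.
have bar : (b, a) \in rdart by apply: (swap_rdart dr).
have step_ba : step (b, a) = (a, b') by apply: step_eq.
have : fconnect step (a, b) (swap (a, b)).
  rewrite -fconnect_orbit in ed; rewrite -fconnect_orbit in ed'.
  apply: (@connect_trans _ _ (a, b')).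
    by apply: (@connect_trans _ _ e) ed'; rewrite fconnect_step_sym.
  by rewrite -step_ba fconnect_step_sym ?fconnect1 ?step_rdart.
by move/iter_findex/eqP; apply/negP; apply: iter_step_neq_swap.
Qed.

Definition dart_cycle e : seq V := map fst (orbit step e).

Lemma dart_cycle_uniq e : e \in rdart -> uniq (dart_cycle e).
Proof. by move=> er; rewrite map_inj_in_uniq ?orbit_uniq //; apply: orbit_fst_inj. Qed.

Lemma dart_cycle_cycle e : e \in rdart -> cycle r (dart_cycle e).
Proof.
move=> er; rewrite cycle_map; apply: (@sub_in_cycle _ rdart (frel step)).
- by move=> d _ dr _ /eqP <-.
- by apply/allP; apply: orbit_rdart.
- exact: cycle_orbit_in step_rdart step_inj _ er.
Qed.

Lemma next_dart_cycle e d : e \in rdart -> d \in orbit step e ->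
  next (dart_cycle e) d.1 = d.2.
Proof.
move=> er ed; rewrite next_map_in ?orbit_uniq //; last exact: orbit_fst_inj.
by have /eqP <- := next_cycle (cycle_orbit_in step_rdart step_inj er) ed.
Qed.

End TwoRegular.

Section StarPacking.
Variables (V : finType) (adj s : rel V).
Hypotheses (adj_sym : symmetric adj) (adj_irr : irreflexive adj).
Hypotheses (adj_cubic : cubic adj) (s_stars : perfect_star_packing adj s).

Local Notation C := (centers s).

Lemma star_sub_adj : subrel s adj. Proof. by case: s_stars. Qed.

Lemma center_star c w : c \in C -> adj c w -> s c w.
Proof.
rewrite inE => /eqP star3 cw.
have star_nbhd : [set w | s c w] \subset nbhd adj c.
  by apply/subsetP => y; rewrite !inE; apply: star_sub_adj.
have : [set w | s c w] = nbhd adj c.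
  by apply/eqP; rewrite eqEcard star_nbhd star3 adj_cubic.
by move/setP/(_ w); rewrite !inE cw.
Qed.

Lemma star_component v : exists2 c, c \in C &
  (forall w, connect s v w -> w != c -> s c w) /\
  (forall w, connect s v w -> w \in C -> w = c).
Proof.
case: s_stars => _ _ /(_ v) [K4 [c cK [c_star leaves]]].
set K := [set w | connect s v w] in K4 cK c_star leaves.
have K_closed w w' : w \in K -> s w w' -> w' \in K.
  by rewrite !inE => vw /connect1; apply: connect_trans.
have s_neq w w' : s w w' -> w' != w.
  by apply: contraTneq => ->; apply/negP => /star_sub_adj; rewrite adj_irr.
have cC : c \in C.
  rewrite inE; have -> : [set w | s c w] = K :\ c.
    apply/setP => w; rewrite in_setD1 [in LHS]inE.
    apply/idP/andP => [cw|[wc wK]]; last exact: c_star.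
    by rewrite s_neq // (K_closed c).
  by move: K4; rewrite (cardsD1 c) cK add1n => -[->].
exists c => //; split=> [w vw|w vw]; first by apply: c_star; rewrite inE.
apply: contraTeq => wc; rewrite inE; apply/negP => /eqP w3.
suff : #|[set y | s w y]| <= 1 by rewrite w3.
rewrite -(cards1 c); apply/subset_leq_card/subsetP => y; rewrite !inE => wy.
have wK : w \in K by rewrite inE.
have yK := K_closed _ _ wK wy.
by apply: contraTT wy => yc; apply: leaves.
Qed.

Lemma center_nbr_uniq v c1 c2 : c1 \in C -> c2 \in C ->
  adj v c1 -> adj v c2 -> c1 = c2.
Proof.
move=> c1C c2C vc1 vc2; have [c _ [_ centers_eq]] := star_component v.
have star_v c' : c' \in C -> adj v c' -> connect s v c'.
  case: s_stars => s_sym _ _ c'C vc'.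
  by rewrite connect1 // s_sym center_star // adj_sym.
rewrite (centers_eq c1 (star_v c1 c1C vc1) c1C).
by rewrite (centers_eq c2 (star_v c2 c2C vc2) c2C).
Qed.

Lemma centers_indep c1 c2 : c1 \in C -> c2 \in C -> ~~ adj c1 c2.
Proof.
move=> c1C c2C; apply/negP => c12; have [c _ [_ centers_eq]] := star_component c1.
have e1 := centers_eq c1 (connect0 _ _) c1C.
have e2 := centers_eq c2 (connect1 (center_star c1C c12)) c2C.
by move: c12; rewrite e1 e2 adj_irr.
Qed.

Lemma noncenter_center_nbr v : v \notin C -> exists2 c, c \in C & adj v c.
Proof.
move=> vC; have [c cC [c_star _]] := star_component v.
have vc : v != c by apply: contraNneq vC => ->.
by exists c; rewrite // adj_sym star_sub_adj // c_star.
Qed.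

Definition noncenter_adj : rel V := fun u v => [&& adj u v, u \notin C & v \notin C].

Lemma noncenter_adj_sym : symmetric noncenter_adj.
Proof. by move=> u v; rewrite /noncenter_adj adj_sym [(u \notin C) && _]andbC. Qed.

Lemma noncenter_adj_irr : irreflexive noncenter_adj.
Proof. by move=> v; rewrite /noncenter_adj adj_irr. Qed.

Lemma noncenter_adj_deg2 u v : noncenter_adj u v ->
  #|[set w | noncenter_adj u w]| = 2.
Proof.
case/and3P=> _ uC _; have [c cC uc] := noncenter_center_nbr uC.
have : nbhd adj u = c |: [set w | noncenter_adj u w].
  apply/setP => w; rewrite !inE /noncenter_adj uC /=.
  case: (boolP (w \in C)) => wC; rewrite ?andbT ?andbF ?orbF.
    by apply/idP/eqP => [uw|->//]; apply: center_nbr_uniq wC cC uw uc.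
  by have /negbTE -> : w != c by apply: contraNneq wC => ->.
have cN : c \notin [set w | noncenter_adj u w] by rewrite inE /noncenter_adj cC !andbF.
by move=> nbhdE; move: (adj_cubic u); rewrite nbhdE cardsU1 cN => -[].
Qed.

End StarPacking.

Lemma face_vertices_eq (T : finType) (F : {set T * T}) (l : seq (T * T)) :
  F =i l -> face_vertices F =i map fst l.
Proof.
by move=> F_eq y; apply/imsetP/mapP => -[d d_in ->]; exists d; rewrite ?F_eq // -F_eq.
Qed.

Lemma face_edge_dart (T : finType) (F : {set T * T}) a b :
  [set a; b] \in face_edges F -> (a, b) \in F \/ (b, a) \in F.
Proof.
case/imsetP => -[u v] uvF /= /setP ab_uv.
move: (ab_uv a) (ab_uv b) (ab_uv u) (ab_uv v); rewrite !inE !eqxx ?orbT /=.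
move=> /esym/orP[]/eqP-> /esym/orP[]/eqP->; rewrite ?eqxx ?orbb; auto.
- by move=> _ /eqP vu; move: uvF; rewrite vu; auto.
- by move=> /eqP uv _; move: uvF; rewrite uv; auto.
Qed.

Section RotationSystem.
Variables (V : finType) (adj : rel V) (rho : V -> V -> V).
Hypotheses (adj_sym : symmetric adj) (rot : rotation_system adj rho).

Local Notation fs := (face_succ rho).

Lemma rho_adj v u : adj v u -> adj v (rho v u).
Proof. by case: (rot v) => rho_nbhd _; apply: rho_nbhd. Qed.

Lemma rho_inj v : {in nbhd adj v &, injective (rho v)}.
Proof.
have rho_nbhd : {homo rho v : u / u \in nbhd adj v}.
  by move=> u; rewrite !inE; apply: rho_adj.
apply/imset_injP; suff -> : rho v @: nbhd adj v = nbhd adj v by [].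
apply/setP => w; apply/imsetP/idP => [[u /rho_nbhd + ->] //|vw].
have /iter_findex w_eq : fconnect (rho v) (rho v w) w.
  by case: (rot v) => _; apply; rewrite -!(in_set (adj v)) ?rho_nbhd.
exists (iter (findex (rho v) (rho v w) w) (rho v) w).
  exact: iter_in rho_nbhd _ vw.
by rewrite -iterS iterSr w_eq.
Qed.

Lemma rho_rho_neq v u : #|nbhd adj v| = 3 -> adj v u -> rho v (rho v u) != u.
Proof.
move=> v3 vu; apply/eqP => rho2.
suff /subset_leq_card : nbhd adj v \subset [set u; rho v u].
  by rewrite v3 cards2; case: (_ != _).
apply/subsetP => w; rewrite inE => vw.
have /iter_findex <- := (proj2 (rot v)) u w vu vw.
elim: (findex _ _ _) => [|k IHk] /=; first by rewrite !inE eqxx.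
by move: IHk; rewrite !inE => /orP [] /eqP ->; rewrite ?rho2 eqxx ?orbT.
Qed.

Lemma face_succ_dart : {homo fs : d / d \in darts adj}.
Proof. by case=> a b; rewrite !inE /= => ab; rewrite rho_adj // adj_sym. Qed.

Lemma face_succ_inj : {in darts adj &, injective fs}.
Proof.
case=> a b [a' b']; rewrite !inE /= => ab a'b' [eb rho_eq]; subst b'.
by congr (_, _); apply: (@rho_inj b) rho_eq; rewrite inE adj_sym.
Qed.

Lemma face_sub_darts F : F \in faces adj rho -> {subset F <= darts adj}.
Proof.
case/imsetP => e er -> d; rewrite inE => /iter_findex <-.
exact: iter_in face_succ_dart _ er.
Qed.

Lemma face_succ_closed F d : F \in faces adj rho -> d \in F -> fs d \in F.
Proof.
by case/imsetP => e _ ->; rewrite !inE => ed; apply: connect_trans ed (fconnect1 _ _).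
Qed.

Lemma face_traject F d : F \in faces adj rho -> d \in F ->
  F =i traject fs d #|F| /\ iter #|F| fs d = d.
Proof.
move=> FF dF; have dD := face_sub_darts FF dF.
have F_eq : F =i fconnect fs d.
  case/imsetP: FF dF dD => e eD ->; rewrite inE => ed dD y; rewrite inE.
  apply/idP/idP => [ey|]; last exact: connect_trans.
  apply: connect_trans ey.
  by rewrite (fconnect_sym_in face_succ_dart face_succ_inj).
have ord : order fs d = #|F| by apply: eq_card => y; rewrite F_eq.
split; first by move=> y; rewrite F_eq -topredE /= fconnect_orbit -ord.
by rewrite -ord (iter_order_in face_succ_dart face_succ_inj).
Qed.

Lemma face_consecutive F a b c : F \in faces adj rho ->
  {in F &, injective fst} -> (c, b) \in F -> (b, a) \in F -> rho b c = a.
Proof.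
by move=> FF F_inj cbF baF; case: (F_inj _ _ (face_succ_closed FF cbF) baF erefl).
Qed.

Lemma pentagon_walk P x : P \in faces adj rho -> #|P| = 5 ->
  #|face_vertices P| = #|P| -> x \in face_vertices P ->
  exists a1 a2 a3 a4,
    [/\ uniq [:: x; a1; a2; a3; a4],
         P =i [:: (x, a1); (a1, a2); (a2, a3); (a3, a4); (a4, x)] &
         fpath fs (x, a1) [:: (a1, a2); (a2, a3); (a3, a4); (a4, x)]].
Proof.
move=> PF P5 P_inj /imsetP [[x' a1] dP /= ->{x}].
have [P_eq P_iter] := face_traject PF dP; rewrite P5 /= in P_eq P_iter.
pose a2 := rho a1 x'; pose a3 := rho a2 a1; pose a4 := rho a3 a2.
have a4x : rho a4 a3 = x' by case: P_iter.
have fs4 : fs (fs (fs (fs (x', a1)))) = (a4, x') by rewrite -[X in _ = (_, X)]a4x.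
rewrite fs4 in P_eq; exists a1, a2, a3, a4; split.
- change (uniq [:: x'; a1; a2; a3; a4]); apply/card_uniqP.
  by rewrite -[size _]/5 -P5 -P_inj (eq_card (face_vertices_eq P_eq)).
- exact: P_eq.
- by rewrite /= -fs4 !eqxx.
Qed.

End RotationSystem.

Section PentagonCycle.
Variables (V : finType) (adj : rel V) (rho : V -> V -> V) (s : rel V).
Hypotheses (adj_sym : symmetric adj) (adj_irr : irreflexive adj).
Hypotheses (adj_cubic : cubic adj) (rot : rotation_system adj rho).
Hypothesis faces_simple :
  forall F, F \in faces adj rho -> #|face_vertices F| = #|F|.
Hypothesis s_stars : perfect_star_packing adj s.
Variables (P : {set V * V}) (x a1 a2 a3 a4 : V).
Hypotheses (PF : P \in faces adj rho) (xC : x \in centers s).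
Hypothesis a_uniq : uniq [:: x; a1; a2; a3; a4].
Hypothesis P_eq : P =i [:: (x, a1); (a1, a2); (a2, a3); (a3, a4); (a4, x)].
Hypothesis P_walk :
  fpath (face_succ rho) (x, a1) [:: (a1, a2); (a2, a3); (a3, a4); (a4, x)].

Local Notation C := (centers s).
Local Notation r := (noncenter_adj adj s).
Local Notation p := (dart_cycle r (a1, a2)).

Let vertex_neq i j : i < 5 -> j < 5 -> i != j ->
  nth x [:: x; a1; a2; a3; a4] i != nth x [:: x; a1; a2; a3; a4] j.
Proof. by move=> i5 j5; rewrite nth_uniq. Qed.

Let walk_steps : [/\ face_succ rho (a1, a2) = (a2, a3),
  face_succ rho (a2, a3) = (a3, a4) & face_succ rho (a3, a4) = (a4, x)].
Proof. by case/and5P: P_walk => _ /eqP-> /eqP-> /eqP->. Qed.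

Let r_sym : symmetric r := noncenter_adj_sym s adj_sym.
Let r_irr : irreflexive r := noncenter_adj_irr s adj_irr.
Let r_deg2 := noncenter_adj_deg2 adj_sym adj_irr adj_cubic s_stars.

Lemma pentagon_adj : [/\ adj x a1, adj a1 a2, adj a2 a3, adj a3 a4 & adj a4 x].
Proof.
have P_adj d : d \in P -> adj d.1 d.2.
  by move/(face_sub_darts adj_sym rot PF); rewrite inE.
by split; apply: (P_adj (_, _)); rewrite P_eq !inE eqxx ?orbT.
Qed.

Lemma pentagon_noncenters : [/\ a1 \notin C, a2 \notin C, a3 \notin C & a4 \notin C].
Proof.
have [xa1 a12 _ a34 a4x] := pentagon_adj.
have x_nbr v : adj x v -> v \notin C.
  move=> xv; apply: contraL xv => vC.
  exact: (centers_indep adj_irr adj_cubic s_stars xC vC).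
have a2C : a2 \notin C.
  have xa2 : x != a2 := @vertex_neq 0 2 isT isT isT.
  apply/negP => a2C; move/eqP: xa2; apply.
  have a1x : adj a1 x by rewrite adj_sym.
  exact: (center_nbr_uniq adj_sym adj_irr adj_cubic s_stars xC a2C a1x a12).
have a3C : a3 \notin C.
  have xa3 : x != a3 := @vertex_neq 0 3 isT isT isT.
  apply/negP => a3C; move/eqP: xa3; apply.
  have a43 : adj a4 a3 by rewrite adj_sym.
  exact: (center_nbr_uniq adj_sym adj_irr adj_cubic s_stars xC a3C a4x a43).
by split; rewrite // x_nbr // adj_sym.
Qed.

Let a12_rdart : (a1, a2) \in rdart r.
Proof.
have [_ a12 _ _ _] := pentagon_adj; have [a1C a2C _ _] := pentagon_noncenters.
by rewrite inE /= /noncenter_adj a12 a1C a2C.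
Qed.

Lemma pentagon_steps : step r (a1, a2) = (a2, a3) /\ step r (a2, a3) = (a3, a4).
Proof.
have [_ a12 a23 a34 _] := pentagon_adj; have [a1C a2C a3C a4C] := pentagon_noncenters.
have a31 : a3 != a1 := @vertex_neq 3 1 isT isT isT.
have a42 : a4 != a2 := @vertex_neq 4 2 isT isT isT.
by split; apply: (step_eq r_sym r_deg2);
  rewrite /noncenter_adj ?a12 ?a23 ?a34 ?a1C ?a2C ?a3C ?a4C.
Qed.

Lemma pentagon_darts_on_orbit :
  {subset [:: (a1, a2); (a2, a3); (a3, a4)] <= orbit (step r) (a1, a2)}.
Proof.
have [s12 s23] := pentagon_steps.
move=> d; rewrite !inE => /or3P [] /eqP ->; first exact: in_orbit.
  by rewrite -s12; apply/mem_orbit/in_orbit.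
by rewrite -s23 -s12; apply/mem_orbit/mem_orbit/in_orbit.
Qed.

Lemma pentagon_path_on_cycle : [/\ next p a1 = a2, next p a2 = a3 & next p a3 = a4].
Proof.
by split; apply: (next_dart_cycle r_sym r_irr r_deg2 a12_rdart (d := (_, _)));
  apply: pentagon_darts_on_orbit; rewrite !inE eqxx ?orbT.
Qed.

Lemma mem_pentagon_cycle : {subset [:: a1; a2; a3; a4] <= p}.
Proof.
have [n1 n2 n3] := pentagon_path_on_cycle.
have a1p : a1 \in p by apply: (map_f fst (in_orbit _ (a1, a2))).
have a2p : a2 \in p by rewrite -[X in X \in _]n1 mem_next.
have a3p : a3 \in p by rewrite -[X in X \in _]n2 mem_next.
have a4p : a4 \in p by rewrite -[X in X \in _]n3 mem_next.
by move=> v; rewrite !inE => /or4P [] /eqP ->.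
Qed.

Lemma pentagon_cycle_is_cycle : is_cycle adj p.
Proof.
split; first exact: dart_cycle_uniq.
  apply: (@uniq_leq_size _ [:: a1; a2; a3]).
    move: a_uniq; rewrite -[[:: x; _; _; _; _]]/([:: x] ++ [:: a1; a2; a3] ++ [:: a4]).
    by rewrite !cat_uniq => /and3P [_ _ /andP []].
  move=> v v_in; apply: mem_pentagon_cycle; move: v_in.
  by rewrite !inE => /or3P [] ->; rewrite ?orbT.
apply: sub_cycle (dart_cycle_cycle r_sym r_deg2 a12_rdart).
by move=> u v /and3P [].
Qed.

Lemma pentagon_cycle_noncenters v : v \in p -> v \notin C.
Proof.
by move=> vp; case/and3P: (next_cycle (dart_cycle_cycle r_sym r_deg2 a12_rdart) vp).
Qed.

Lemma pentagon_cycle_avoids_x u : [set u; x] \notin cycle_edges p.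
Proof.
apply/negP => /imsetP [v vp /setP/(_ x)]; rewrite !inE eqxx orbT.
case/esym/orP => /eqP xv; move: xC; apply/negP.
  by rewrite xv pentagon_cycle_noncenters.
by rewrite xv pentagon_cycle_noncenters ?mem_next.
Qed.

Lemma pentagon_cycle_not_facial : ~ facial_cycle adj rho p.
Proof.
case=> F FF p_F.
have F_inj : {in F &, injective fst}.
  by apply/imset_injP; rewrite -/(face_vertices F) faces_simple.
have [s12 s23 s34] := walk_steps.
have a4xF : (a4, x) \notin F.
  apply: contra (pentagon_cycle_avoids_x a4); rewrite p_F.
  exact: (imset_f (fun d => [set d.1; d.2])).
have a12F : (a1, a2) \notin F.
  apply: contra a4xF => a12F; rewrite -s34 -s23 -s12.
  by do 3 apply: (face_succ_closed FF).
have a23F : (a2, a3) \notin F.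
  apply: contra a4xF => a23F; rewrite -s34 -s23.
  by do 2 apply: (face_succ_closed FF).
have [n1 n2 _] := pentagon_path_on_cycle.
have reversed_dart v : v \in p -> (v, next p v) \notin F -> (next p v, v) \in F.
  move=> vp /negbTE vF; have : [set v; next p v] \in face_edges F.
    by rewrite -p_F; apply: (imset_f (fun u => [set u; next p u])).
  by case/face_edge_dart; rewrite ?vF.
have a1p : a1 \in p by apply: mem_pentagon_cycle; rewrite inE eqxx.
have a2p : a2 \in p by apply: mem_pentagon_cycle; rewrite !inE eqxx orbT.
have a21F : (a2, a1) \in F by move: (reversed_dart a1 a1p); rewrite n1; apply.
have a32F : (a3, a2) \in F by move: (reversed_dart a2 a2p); rewrite n2; apply.
have rho23 : rho a2 a3 = a1 := face_consecutive FF F_inj a32F a21F.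
have rho21 : rho a2 a1 = a3 by case: s12.
have [_ a12 _ _ _] := pentagon_adj; have a21 : adj a2 a1 by rewrite adj_sym.
by move: (rho_rho_neq rot (adj_cubic a2) a21); rewrite rho21 rho23 eqxx.
Qed.

Lemma pentagon_vertices_on_cycle v : v \in face_vertices P -> v != x -> v \in p.
Proof.
rewrite (face_vertices_eq P_eq) /= inE => /predU1P [->|/mem_pentagon_cycle vp _ //].
by rewrite eqxx.
Qed.

Lemma pentagon_edges_on_cycle d : d \in P -> d.1 != x -> d.2 != x ->
  [set d.1; d.2] \in cycle_edges p.
Proof.
have [n1 n2 n3] := pentagon_path_on_cycle.
have edge v : v \in [:: a1; a2; a3; a4] -> [set v; next p v] \in cycle_edges p.
  by move/mem_pentagon_cycle; apply: (imset_f (fun u => [set u; next p u])).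
rewrite P_eq !inE => /predU1P [-> | /or4P [] /eqP ->] /=; rewrite ?eqxx ?andbF //= => _ _.
- by rewrite -[X in [set _; X]]n1; apply: edge; rewrite !inE eqxx.
- by rewrite -[X in [set _; X]]n2; apply: edge; rewrite !inE eqxx ?orbT.
- by rewrite -[X in [set _; X]]n3; apply: edge; rewrite !inE eqxx ?orbT.
Qed.

Lemma pentagon_cycle_spec :
  [/\ is_cycle adj p, (forall v, v \in p -> v \notin C), ~ facial_cycle adj rho p,
      (forall v, v \in face_vertices P -> v != x -> v \in p) &
      (forall d, d \in P -> d.1 != x -> d.2 != x -> [set d.1; d.2] \in cycle_edges p)].
Proof.
split; [exact: pentagon_cycle_is_cycle | exact: pentagon_cycle_noncenters |
  exact: pentagon_cycle_not_facial | exact: pentagon_vertices_on_cycle |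
  exact: pentagon_edges_on_cycle].
Qed.

End PentagonCycle.

Theorem mainTheorem5 (V : finType) (adj : rel V) (rho : V -> V -> V)
  (s : rel V) (P : {set V * V}) (x : V) :
  fullerene adj rho ->
  perfect_star_packing adj s ->
  P \in faces adj rho -> #|P| = 5 ->
  x \in face_vertices P -> x \in centers s ->
  exists p : seq V,
    [/\ is_cycle adj p,
        (* C lies in G - C(S) *)
        (forall v, v \in p -> v \notin centers s),
        ~ facial_cycle adj rho p,
        (* the path P - x is a subgraph of C *)
        (forall v, v \in face_vertices P -> v != x -> v \in p) &
        (forall d, d \in P -> d.1 != x -> d.2 != x ->
                   [set d.1; d.2] \in cycle_edges p)].
Proof.
move=> [[[adj_sym adj_irr] _ adj_cubic rot _] faces_ok] s_stars PF P5 xP xC.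
have faces_simple F : F \in faces adj rho -> #|face_vertices F| = #|F|.
  by case/faces_ok.
have [a1 [a2 [a3 [a4 [a_uniq P_eq P_walk]]]]] :=
  pentagon_walk adj_sym rot PF P5 (faces_simple P PF) xP.
exists (dart_cycle (noncenter_adj adj s) (a1, a2)).
exact: (pentagon_cycle_spec adj_sym adj_irr adj_cubic rot faces_simple s_stars
  PF xC a_uniq P_eq P_walk).
Qed.
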